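(* Let $m,b\ge 1$ and $r\ge 0$ be integers, let $f\colon[0,1]\to\mathbb R$ be $(r+1)$-times differentiable with $|f^{(r+1)}(x)|\le M$ for all $x\in[0,1]$, and let $B=(B_1,\dots,B_b)\in\mathrm{PTE}(m,b,r)$. Setting $$c_j=\sum_{i\in B_j}\int_{(i-1)/m}^{i/m} f(x)\,dx,\qquad j=1,\dots,b,$$ we have, for all $i,j\in\{1,\dots,b\}$, $$|c_i-c_j|\le \frac{M}{2^{r}\,b\,(r+1)!}.$$
   Context: $[m]=\{1,\dots,m\}$. A partition of $[m]$ into $b$ blocks is an ordered list $(B_1,\dots,B_b)$ of pairwise disjoint (possibly empty) subsets with union $[m]$. It is $r$-regular if $\sum_{x\in B_1}x^k=\dots=\sum_{x\in B_b}x^k$ for all $k=0,1,\dots,r$. $\mathrm{PTE}(m,b,r)$ denotes the set of $r$-regular partitions of $[m]$ into $b$ blocks. *)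

From Stdlib Require Import Reals Lra Lia List ClassicalEpsilon.
Open Scope R_scope.

(* Derivative of g at x relative to the closed interval [0,1]
   (one-sided at the endpoints): the difference quotient tends to l
   as h -> 0 with h <> 0 and x + h in [0,1]. *)
Definition deriv01 (g : R -> R) (x l : R) : Prop :=
  forall eps : R, 0 < eps -> exists delta : R, 0 < delta /\
    forall h : R, h <> 0 -> Rabs h < delta -> 0 <= x + h <= 1 ->
      Rabs ((g (x + h) - g x) / h - l) < eps.

(* Total Riemann integral: the value of the Riemann integral of g over
   [a,b] when g is Riemann integrable there (unspecified otherwise). *)
Definition Rint (g : R -> R) (a b : R) : R :=
  epsilon (inhabits 0)
    (fun v => exists pr : Riemann_integrable g a b, RiemannInt pr = v).

(* Sum of w over the elements x of [m] = {1..m} lying in block j of the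
   partition encoded by B : nat -> nat (B x = index of the block containing x,
   blocks indexed 0..b-1). *)
Definition block_sum (m : nat) (B : nat -> nat) (j : nat) (w : nat -> R) : R :=
  fold_right Rplus 0 (map w (filter (fun x => Nat.eqb (B x) j) (seq 1 m))).

(* B encodes an ordered partition (B_0,...,B_{b-1}) of [m] into b (possibly
   empty) blocks: B_j = {x in [m] | B x = j}. *)
Definition is_partition (m b : nat) (B : nat -> nat) : Prop :=
  forall x : nat, (1 <= x <= m)%nat -> (B x < b)%nat.

Definition PTE (m b r : nat) (B : nat -> nat) : Prop :=
  is_partition m b B /\
  forall k j1 j2 : nat, (k <= r)%nat -> (j1 < b)%nat -> (j2 < b)%nat ->
    block_sum m B j1 (fun x => INR x ^ k) = block_sum m B j2 (fun x => INR x ^ k).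

From Stdlib Require Import Reals List Factorial Lra Lia ClassicalEpsilon.
From Coquelicot Require Import Coquelicot.
Open Scope R_scope.

(* Let P be the Taylor polynomial of f of degree r at 1/2 and T
   an antiderivative of P.  Taylor's theorem gives |f - P| <= K on [0,1] with
   K = M / (2^(r+1) (r+1)!), so the integral of f over the cell
   [(x-1)/m, x/m] is within K/m of the weight w(x) = T(x/m) - T((x-1)/m).
   Since T has degree r+1, w is a polynomial of degree r in x, and an
   r-regular partition equalizes the block sums of every such polynomial.
   Regularity for k = 0 also forces every block to have m/b elements, so
   |c_i - c_j| <= (K/m) (m/b + m/b) = M / (2^r b (r+1)!). *)

(* Projection of the real line onto [0,1]; composing with it extends a function
   on [0,1] to R, so that the library's results for functions on R apply. *)
Definition clamp (y : R) : R := Rmax 0 (Rmin 1 y).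

Lemma clamp_in y : 0 <= clamp y <= 1.
Proof. unfold clamp, Rmax, Rmin; repeat destruct Rle_dec; lra. Qed.

Lemma clamp_id y : 0 <= y <= 1 -> clamp y = y.
Proof. intros. unfold clamp, Rmax, Rmin; repeat destruct Rle_dec; lra. Qed.

Lemma clamp_lipschitz y z : Rabs (clamp y - clamp z) <= Rabs (y - z).
Proof.
  unfold clamp, Rmax, Rmin; repeat destruct Rle_dec;
  unfold Rabs; repeat destruct Rcase_abs; lra.
Qed.

Lemma deriv01_continuous g x l : deriv01 g x l ->
  forall eps, 0 < eps -> exists d, 0 < d /\
    forall y, 0 <= y <= 1 -> Rabs (y - x) < d -> Rabs (g y - g x) < eps.
Proof.
  intros Hd eps Heps.
  destruct (Hd 1 Rlt_0_1) as [d1 [Hd1 Hq]].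
  set (L := Rabs l + 1).
  assert (HL : 0 < L) by (unfold L; generalize (Rabs_pos l); lra).
  exists (Rmin d1 (eps / L)). split.
  { apply Rmin_pos; [lra | apply Rdiv_lt_0_compat; lra]. }
  intros y Hy Hyx.
  assert (Hmin1 := Rmin_l d1 (eps / L)). assert (Hmin2 := Rmin_r d1 (eps / L)).
  destruct (Req_dec y x) as [-> | Hne].
  { rewrite Rminus_diag, Rabs_R0; lra. }
  assert (Hq' := Hq (y - x) ltac:(lra) ltac:(lra) ltac:(replace (x + (y - x)) with y by ring; lra)).
  replace (x + (y - x)) with y in Hq' by ring.
  set (q := (g y - g x) / (y - x)) in *.
  assert (Hslope : Rabs q < L).
  { unfold L. replace q with ((q - l) + l) by ring.
    generalize (Rabs_triang (q - l) l); lra. }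
  replace (g y - g x) with (q * (y - x)) by (unfold q; field; lra).
  rewrite Rabs_mult.
  assert (Hsmall : Rabs (y - x) * L < eps).
  { assert (Hyx' : Rabs (y - x) < eps / L) by lra.
    apply (Rmult_lt_compat_r L) in Hyx'; [|lra].
    unfold Rdiv in Hyx'. rewrite Rmult_assoc, Rinv_l in Hyx'; lra. }
  generalize (Rabs_pos q) (Rabs_pos (y - x)). nra.
Qed.

Lemma clamp_continuous g : (forall x, 0 <= x <= 1 -> exists l, deriv01 g x l) ->
  forall y, continuity_pt (fun t => g (clamp t)) y.
Proof.
  intros Hg y eps Heps.
  destruct (Hg (clamp y) (clamp_in y)) as [l Hl].
  destruct (deriv01_continuous g (clamp y) l Hl eps Heps) as [d [Hd Hcont]].
  exists d. split; [exact Hd|]. intros z [_ Hz]. simpl in *. unfold R_dist in *.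
  apply Hcont; [apply clamp_in|]. generalize (clamp_lipschitz z y). lra.
Qed.

Lemma clamp_is_derive g x l : 0 < x < 1 -> deriv01 g x l ->
  is_derive (fun t => g (clamp t)) x l.
Proof.
  intros Hx Hd. apply is_derive_Reals. intros eps Heps.
  destruct (Hd eps Heps) as [d [Hd0 Hq]].
  assert (Hpos : 0 < Rmin d (Rmin x (1 - x))) by (repeat apply Rmin_pos; lra).
  exists (mkposreal _ Hpos). simpl. intros h Hh Hsmall.
  assert (H1 := Rmin_l d (Rmin x (1 - x))). assert (H2 := Rmin_r d (Rmin x (1 - x))).
  assert (H3 := Rmin_l x (1 - x)). assert (H4 := Rmin_r x (1 - x)).
  assert (Hh' : - Rabs h <= h <= Rabs h) by (unfold Rabs; destruct Rcase_abs; lra).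
  rewrite (clamp_id (x + h)), (clamp_id x) by lra.
  apply Hq; auto; lra.
Qed.

Lemma is_derive_deriv01 g x l : is_derive g x l -> deriv01 g x l.
Proof.
  intros Hd eps Heps. apply is_derive_Reals in Hd.
  destruct (Hd eps Heps) as [d Hq].
  exists d. split; [apply cond_pos|]. intros h Hh Hsmall _. now apply Hq.
Qed.

Lemma deriv01_plus g h x l l' : deriv01 g x l -> deriv01 h x l' ->
  deriv01 (fun t => g t + h t) x (l + l').
Proof.
  intros Hg Hh eps Heps.
  destruct (Hg (eps / 2) ltac:(lra)) as [d1 [Hd1 Hq1]].
  destruct (Hh (eps / 2) ltac:(lra)) as [d2 [Hd2 Hq2]].
  exists (Rmin d1 d2). split; [now apply Rmin_pos|].
  intros u Hu Hsmall Hx.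
  assert (E1 := Hq1 u Hu ltac:(generalize (Rmin_l d1 d2); lra) Hx).
  assert (E2 := Hq2 u Hu ltac:(generalize (Rmin_r d1 d2); lra) Hx).
  replace ((g (x + u) + h (x + u) - (g x + h x)) / u - (l + l'))
    with (((g (x + u) - g x) / u - l) + ((h (x + u) - h x) / u - l')) by (field; lra).
  generalize (Rabs_triang ((g (x + u) - g x) / u - l) ((h (x + u) - h x) / u - l')). lra.
Qed.

Lemma mvt01 G G' a b : (forall x, 0 <= x <= 1 -> deriv01 G x (G' x)) ->
  0 <= a -> a <= b -> b <= 1 ->
  exists c, a <= c <= b /\ G b - G a = G' c * (b - a).
Proof.
  intros HG Ha Hab Hb.
  destruct (MVT_gen (fun t => G (clamp t)) a b G') as [c [Hc Hmvt]].
  - intros x Hx. rewrite Rmin_left, Rmax_right in Hx by lra.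
    apply clamp_is_derive; [lra | apply HG; lra].
  - intros x _. apply clamp_continuous. intros z Hz. exists (G' z). now apply HG.
  - rewrite Rmin_left, Rmax_right in Hc by lra.
    exists c. split; [exact Hc|]. now rewrite !clamp_id in Hmvt by lra.
Qed.

Lemma increment_bound G G' psi psi' a b :
  (forall x, 0 <= x <= 1 -> deriv01 G x (G' x)) ->
  (forall y, is_derive psi y (psi' y)) ->
  0 <= a -> a <= b -> b <= 1 ->
  (forall y, a <= y <= b -> Rabs (G' y) <= psi' y) ->
  Rabs (G b - G a) <= psi b - psi a.
Proof.
  intros HG Hpsi Ha Hab Hb Hdom.
  assert (Hshift : forall s, forall x, 0 <= x <= 1 ->
            deriv01 (fun t => G t + s * psi t) x (G' x + s * psi' x)).
  { intros s x Hx. apply deriv01_plus; [now apply HG|].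
    apply is_derive_deriv01, is_derive_scal, Hpsi. }
  destruct (mvt01 _ _ a b (Hshift (-1)) Ha Hab Hb) as [c1 [Hc1 E1]].
  destruct (mvt01 _ _ a b (Hshift 1) Ha Hab Hb) as [c2 [Hc2 E2]].
  assert (D1 := Hdom c1 Hc1). assert (D2 := Hdom c2 Hc2).
  apply Rabs_le_between in D1. apply Rabs_le_between in D2.
  apply Rabs_le. split; nra.
Qed.

Fixpoint taylor (a : nat -> R) (x0 : R) (n : nat) (y : R) : R :=
  match n with
  | O => 0
  | S k => taylor a x0 k y + a k * (y - x0) ^ k / INR (fact k)
  end.

Lemma is_derive_power_fact s x0 n y :
  is_derive (fun t => (s * (t - x0)) ^ S n / INR (fact (S n))) y
    (s * (s * (y - x0)) ^ n / INR (fact n)).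
Proof.
  auto_derive; [easy|].
  change (match n with 0%nat => 1 | S _ => INR n + 1 end) with (INR (S n)).
  change (fact n + n * fact n)%nat with (fact (S n)).
  rewrite fact_simpl, mult_INR.
  assert (H1 := INR_fact_neq_0 n). assert (H2 : INR (S n) <> 0) by (apply not_0_INR; lia).
  unfold Rminus. field. split; assumption.
Qed.

Lemma taylor_derive a x0 n y :
  is_derive (taylor a x0 (S n)) y (taylor (fun k => a (S k)) x0 n y).
Proof.
  revert y. induction n as [|n IH]; intros y.
  - apply (is_derive_ext (fun _ => a 0%nat)); [intros t; simpl; field|].
    exact (is_derive_const (V := R_NormedModule) (a 0%nat) y).
  - apply (is_derive_ext (fun t => taylor a x0 (S n) t +
             a (S n) * ((1 * (t - x0)) ^ S n / INR (fact (S n))))).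
    { intros t. change (@eq R (taylor a x0 (S n) t + a (S n) * ((1 * (t - x0)) ^ S n / INR (fact (S n))))
        (taylor a x0 (S n) t + a (S n) * (t - x0) ^ S n / INR (fact (S n)))).
      rewrite Rmult_1_l. unfold Rdiv. ring. }
    replace (taylor (fun k => a (S k)) x0 (S n) y) with
      (taylor (fun k => a (S k)) x0 n y + a (S n) * (1 * (1 * (y - x0)) ^ n / INR (fact n)))
      by (simpl; rewrite !Rmult_1_l; unfold Rdiv; ring).
    apply (is_derive_plus (taylor a x0 (S n))); [apply IH|].
    apply is_derive_scal, is_derive_power_fact.
Qed.

Lemma taylor_continuous a x0 n y : continuous (taylor a x0 n) y.
Proof.
  destruct n as [|n].
  - apply continuous_const.
  - apply (@ex_derive_continuous R_AbsRing R_NormedModule).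
    eexists. apply taylor_derive.
Qed.

Lemma taylor_center a x0 n : taylor a x0 (S n) x0 = a 0%nat.
Proof.
  induction n as [|n IH]; [simpl; field|].
  change (taylor a x0 (S n) x0 + a (S n) * (x0 - x0) ^ S n / INR (fact (S n)) = a 0%nat).
  rewrite IH, Rminus_diag, pow_i by lia. unfold Rdiv. ring.
Qed.

(* For s = +-1, the function s C (s (t - x0))^(n+1) / (n+1)! has derivative
   C (s (t - x0))^n / n!, which equals C |t - x0|^n / n! on the side of x0
   where s (t - x0) >= 0. *)
Lemma is_derive_signed_power s C x0 n t : s * s = 1 ->
  is_derive (fun u => s * C * ((s * (u - x0)) ^ S n / INR (fact (S n)))) t
    (C * (s * (t - x0)) ^ n / INR (fact n)).
Proof.
  intros Hs.
  assert (E : s * C * (s * (s * (t - x0)) ^ n / INR (fact n))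
              = C * (s * (t - x0)) ^ n / INR (fact n)).
  { unfold Rdiv. transitivity ((s * s) * (C * (s * (t - x0)) ^ n * / INR (fact n))); [ring|].
    rewrite Hs. ring. }
  rewrite <- E. apply is_derive_scal, is_derive_power_fact.
Qed.

(* A function vanishing at x0 whose derivative is bounded by
   C |t - x0|^n / n! is bounded by C |x - x0|^(n+1) / (n+1)!: compare it on
   each side of x0 with the signed power above. *)
Lemma integrate_power_bound H H' C x0 n :
  (forall t, 0 <= t <= 1 -> deriv01 H t (H' t)) ->
  0 <= x0 <= 1 -> H x0 = 0 ->
  (forall t, 0 <= t <= 1 -> Rabs (H' t) <= C * Rabs (t - x0) ^ n / INR (fact n)) ->
  forall x, 0 <= x <= 1 -> Rabs (H x) <= C * Rabs (x - x0) ^ S n / INR (fact (S n)).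
Proof.
  intros HH Hx0 HH0 HH' x Hx.
  set (psi := fun s u => s * C * ((s * (u - x0)) ^ S n / INR (fact (S n)))).
  assert (Hpsi0 : forall s, psi s x0 = 0).
  { intros s. unfold psi. rewrite Rminus_diag, Rmult_0_r, pow_i by lia. unfold Rdiv. ring. }
  destruct (Rle_or_lt x0 x) as [Hle | Hlt].
  - assert (Hinc := increment_bound H H' (psi 1) _ x0 x HH
                      (fun t => is_derive_signed_power 1 C x0 n t ltac:(ring))
                      ltac:(lra) Hle ltac:(lra)).
    rewrite HH0, Rminus_0_r, Hpsi0, Rminus_0_r in Hinc.
    unfold psi in Hinc. rewrite (Rabs_right (x - x0)) by lra. rewrite !Rmult_1_l in Hinc.
    unfold Rdiv in *. rewrite Rmult_assoc. apply Hinc.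
    intros y Hy. rewrite Rmult_1_l, <- (Rabs_right (y - x0)) by lra. apply HH'. lra.
  - assert (Hinc := increment_bound H H' (psi (-1)) _ x x0 HH
                      (fun t => is_derive_signed_power (-1) C x0 n t ltac:(ring))
                      ltac:(lra) ltac:(lra) ltac:(lra)).
    rewrite HH0, Hpsi0, Rminus_0_l, Rabs_Ropp in Hinc.
    unfold psi in Hinc. rewrite (Rabs_left (x - x0)) by lra.
    replace (-1 * (x - x0)) with (- (x - x0)) in Hinc by ring.
    unfold Rdiv in *. eapply Rle_trans; [apply Hinc | right; ring].
    intros y Hy. replace (-1 * (y - x0)) with (Rabs (y - x0)) by (rewrite Rabs_left1; lra).
    apply HH'. lra.
Qed.

Lemma taylor_remainder n : forall (fd : nat -> R -> R) C x0,
  0 <= x0 <= 1 ->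
  (forall k, (k < n)%nat -> forall x, 0 <= x <= 1 -> deriv01 (fd k) x (fd (S k) x)) ->
  (forall x, 0 <= x <= 1 -> Rabs (fd n x) <= C) ->
  forall x, 0 <= x <= 1 ->
  Rabs (fd 0%nat x - taylor (fun k => fd k x0) x0 n x) <= C * Rabs (x - x0) ^ n / INR (fact n).
Proof.
  induction n as [|n IH]; intros fd C x0 Hx0 Hder HC.
  { intros x Hx. simpl. rewrite Rminus_0_r. unfold Rdiv. rewrite Rmult_1_r, Rinv_1, Rmult_1_r.
    auto. }
  (* The error of order n+1 for fd vanishes at x0, and its derivative is the
     error of order n for fd 1, bounded by the induction hypothesis. *)
  apply (integrate_power_bound _ (fun t => fd 1%nat t - taylor (fun k => fd (S k) x0) x0 n t));
    [| exact Hx0 | rewrite taylor_center; ring |].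
  - intros t Ht. apply deriv01_plus; [apply Hder; [lia | exact Ht]|].
    apply is_derive_deriv01, (is_derive_opp (taylor _ x0 (S n))), taylor_derive.
  - intros t Ht. apply (IH (fun k => fd (S k)) C x0 Hx0); auto.
    intros k Hk; apply Hder; lia.
Qed.

Corollary taylor_remainder_midpoint n (fd : nat -> R -> R) C :
  (forall k, (k < n)%nat -> forall x, 0 <= x <= 1 -> deriv01 (fd k) x (fd (S k) x)) ->
  (forall x, 0 <= x <= 1 -> Rabs (fd n x) <= C) ->
  forall x, 0 <= x <= 1 ->
  Rabs (fd 0%nat x - taylor (fun k => fd k (/2)) (/2) n x) <= C / (2 ^ n * INR (fact n)).
Proof.
  intros Hder HC x Hx.
  eapply Rle_trans; [apply (taylor_remainder n fd C); auto; lra|].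
  assert (HC0 : 0 <= C) by (generalize (Rabs_pos (fd n 0)), (HC 0); lra).
  unfold Rdiv. rewrite Rinv_mult, <- Rmult_assoc, <- pow_inv.
  apply Rmult_le_compat_r; [left; apply Rinv_0_lt_compat, lt_0_INR, lt_O_fact|].
  apply Rmult_le_compat_l; [exact HC0|].
  apply pow_incr. split; [apply Rabs_pos | apply Rabs_le; lra].
Qed.

(* poly_le d p: p is (extensionally) a real polynomial function of degree at
   most d, generated from constants by sums, scalings and products with affine
   functions. *)
Inductive poly_le : nat -> (R -> R) -> Prop :=
| poly_const d c : poly_le d (fun _ => c)
| poly_plus d p q : poly_le d p -> poly_le d q -> poly_le d (fun y => p y + q y)
| poly_scal d c p : poly_le d p -> poly_le d (fun y => c * p y)
| poly_mul_affine d al be p : poly_le d p -> poly_le (S d) (fun y => (al * y + be) * p y)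
| poly_ext d p q : poly_le d p -> (forall y, p y = q y) -> poly_le d q.

Lemma poly_le_mono d p : poly_le d p -> forall d', (d <= d')%nat -> poly_le d' p.
Proof.
  induction 1 as [d c|d p q _ IHp _ IHq|d c p _ IH|d al be p _ IH|d p q _ IH E];
    intros d' Hd.
  - apply poly_const.
  - apply poly_plus; [apply IHp | apply IHq]; exact Hd.
  - apply poly_scal, IH, Hd.
  - destruct d' as [|d']; [lia|]. apply poly_mul_affine, IH. lia.
  - apply (poly_ext d' p); [apply IH, Hd | exact E].
Qed.

Lemma poly_le_pow al be n : poly_le n (fun y => (al * y + be) ^ n).
Proof.
  induction n as [|n IH].
  - apply (poly_ext 0 (fun _ => 1)); [apply poly_const | reflexivity].
  - apply (poly_ext (S n) (fun y => (al * y + be) * (al * y + be) ^ n));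
      [now apply poly_mul_affine | reflexivity].
Qed.

(* u^(n+1) - v^(n+1) has degree n when u, v are affine with the same slope,
   since u - v is then constant. *)
Lemma poly_le_pow_diff al be be' n :
  poly_le n (fun y => (al * y + be) ^ S n - (al * y + be') ^ S n).
Proof.
  induction n as [|n IH].
  - apply (poly_ext 0 (fun _ => be - be')); [apply poly_const | intros y; simpl; ring].
  - apply (poly_ext (S n) (fun y => (al * y + be) * ((al * y + be) ^ S n - (al * y + be') ^ S n)
                                  + (be - be') * (al * y + be') ^ S n)).
    + apply poly_plus; [now apply poly_mul_affine|].
      apply poly_scal, poly_le_pow.
    + intros y. simpl. ring.
Qed.

Lemma poly_le_taylor_diff a x0 al be be' n :
  poly_le n (fun y => taylor a x0 (S (S n)) (al * y + be) - taylor a x0 (S (S n)) (al * y + be')).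
Proof.
  induction n as [|n IH].
  - apply (poly_ext 0 (fun _ => a 1%nat * (be - be'))); [apply poly_const|].
    intros y. simpl. field.
  - apply (poly_ext (S n) (fun y =>
      (taylor a x0 (S (S n)) (al * y + be) - taylor a x0 (S (S n)) (al * y + be'))
      + a (S (S n)) / INR (fact (S (S n)))
        * ((al * y + (be - x0)) ^ S (S n) - (al * y + (be' - x0)) ^ S (S n)))).
    + apply poly_plus; [apply (poly_le_mono n); [exact IH | lia]|].
      apply poly_scal, poly_le_pow_diff.
    + intros y. cbn [taylor].
      replace (al * y + (be - x0)) with (al * y + be - x0) by ring.
      replace (al * y + (be' - x0)) with (al * y + be' - x0) by ring.
      unfold Rdiv. ring.
Qed.

Definition lsum (w : nat -> R) (L : list nat) : R := fold_right Rplus 0 (map w L).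

Definition block (B : nat -> nat) (j : nat) (L : list nat) : list nat :=
  filter (fun x => Nat.eqb (B x) j) L.

Lemma block_sum_lsum m B j w : block_sum m B j w = lsum w (block B j (seq 1 m)).
Proof. reflexivity. Qed.

Lemma lsum_plus w1 w2 L : lsum (fun x => w1 x + w2 x) L = lsum w1 L + lsum w2 L.
Proof. induction L as [|x L IH]; unfold lsum in *; simpl; [ring | rewrite IH; ring]. Qed.

Lemma lsum_scal c w L : lsum (fun x => c * w x) L = c * lsum w L.
Proof. induction L as [|x L IH]; unfold lsum in *; simpl; [ring | rewrite IH; ring]. Qed.

Lemma lsum_ext w1 w2 L : (forall x, In x L -> w1 x = w2 x) -> lsum w1 L = lsum w2 L.
Proof.
  induction L as [|x L IH]; intros E; [reflexivity|].
  unfold lsum in *; simpl. rewrite E, IH; auto with datatypes.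
Qed.

Lemma lsum_const c L : lsum (fun _ => c) L = c * INR (length L).
Proof.
  induction L as [|x L IH]; unfold lsum in *; simpl length; [simpl; ring|].
  rewrite S_INR. simpl. rewrite IH. ring.
Qed.

Lemma lsum_abs_le w L C : (forall x, In x L -> Rabs (w x) <= C) ->
  Rabs (lsum w L) <= C * INR (length L).
Proof.
  induction L as [|x L IH]; intros Hw.
  - unfold lsum; simpl. rewrite Rabs_R0. lra.
  - unfold lsum in *; simpl length; rewrite S_INR; simpl.
    eapply Rle_trans; [apply Rabs_triang|].
    assert (Hx := Hw x (or_introl eq_refl)).
    assert (HL := IH (fun y Hy => Hw y (or_intror Hy))). lra.
Qed.

Lemma lsum_indicator v c s n :
  lsum (fun j => if Nat.eqb v j then c else 0) (seq s n) =
  if andb (Nat.leb s v) (Nat.ltb v (s + n)) then c else 0.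
Proof.
  revert s; induction n as [|n IH]; intros s; unfold lsum in *; simpl.
  - destruct (Nat.leb_spec s v), (Nat.ltb_spec v (s + 0)); simpl; auto; lia.
  - rewrite IH.
    destruct (Nat.eqb_spec v s), (Nat.leb_spec (S s) v), (Nat.ltb_spec v (S s + n)),
      (Nat.leb_spec s v), (Nat.ltb_spec v (s + S n)); simpl; try ring; lia.
Qed.

Lemma lsum_blocks (B : nat -> nat) b w L : (forall x, In x L -> (B x < b)%nat) ->
  lsum (fun j => lsum w (block B j L)) (seq 0 b) = lsum w L.
Proof.
  induction L as [|x L IH]; intros HB.
  - rewrite (lsum_const 0). unfold lsum; simpl; ring.
  - transitivity (lsum (fun j => (if Nat.eqb (B x) j then w x else 0)
                                 + lsum w (block B j L)) (seq 0 b)).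
    { apply lsum_ext. intros j _. unfold block, lsum. simpl.
      destruct (Nat.eqb (B x) j); simpl; ring. }
    rewrite lsum_plus, lsum_indicator, IH by auto with datatypes.
    assert (Hx := HB x (or_introl eq_refl)).
    destruct (Nat.leb_spec 0 (B x)), (Nat.ltb_spec (B x) (0 + b)); try lia.
    unfold lsum; simpl. ring.
Qed.

Definition equal_block_sums (m b : nat) (B : nat -> nat) (w : nat -> R) : Prop :=
  forall j1 j2, (j1 < b)%nat -> (j2 < b)%nat -> block_sum m B j1 w = block_sum m B j2 w.

Lemma equal_block_sums_plus m b B w1 w2 :
  equal_block_sums m b B w1 -> equal_block_sums m b B w2 ->
  equal_block_sums m b B (fun x => w1 x + w2 x).
Proof.
  intros H1 H2 j1 j2 Hj1 Hj2. rewrite !block_sum_lsum, !lsum_plus, <- !block_sum_lsum.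
  now rewrite (H1 j1 j2), (H2 j1 j2).
Qed.

Lemma equal_block_sums_scal m b B c w :
  equal_block_sums m b B w -> equal_block_sums m b B (fun x => c * w x).
Proof.
  intros H j1 j2 Hj1 Hj2. rewrite !block_sum_lsum, !lsum_scal, <- !block_sum_lsum.
  now rewrite (H j1 j2).
Qed.

Lemma equal_block_sums_ext m b B w1 w2 :
  equal_block_sums m b B w1 -> (forall x, w1 x = w2 x) -> equal_block_sums m b B w2.
Proof.
  intros H E j1 j2 Hj1 Hj2. rewrite !block_sum_lsum.
  rewrite <- !(lsum_ext w1 w2) by auto. apply H; assumption.
Qed.

Lemma pte_poly_moment m b r B d p : PTE m b r B -> poly_le d p ->
  forall e, (d + e <= r)%nat -> equal_block_sums m b B (fun x => INR x ^ e * p (INR x)).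
Proof.
  intros [_ Hreg] Hp.
  induction Hp as [d c|d p q _ IHp _ IHq|d c p _ IH|d al be p _ IH|d p q _ IH E];
    intros e He.
  - apply (equal_block_sums_ext m b B (fun x => c * INR x ^ e)); [|intros; ring].
    apply equal_block_sums_scal. intros j1 j2. apply Hreg. lia.
  - apply (equal_block_sums_ext m b B
      (fun x => INR x ^ e * p (INR x) + INR x ^ e * q (INR x))); [|intros; ring].
    apply equal_block_sums_plus; [apply IHp | apply IHq]; exact He.
  - apply (equal_block_sums_ext m b B (fun x => c * (INR x ^ e * p (INR x)))); [|intros; ring].
    apply equal_block_sums_scal, IH, He.
  - apply (equal_block_sums_ext m b B
      (fun x => al * (INR x ^ S e * p (INR x)) + be * (INR x ^ e * p (INR x))));
      [|intros; simpl; ring].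
    apply equal_block_sums_plus; apply equal_block_sums_scal, IH; lia.
  - apply (equal_block_sums_ext m b B (fun x => INR x ^ e * p (INR x))); [|intros; now rewrite E].
    apply IH, He.
Qed.

Corollary pte_poly m b r B p : PTE m b r B -> poly_le r p ->
  equal_block_sums m b B (fun x => p (INR x)).
Proof.
  intros HB Hp. apply (equal_block_sums_ext m b B (fun x => INR x ^ 0 * p (INR x)));
    [|intros; simpl; ring].
  apply (pte_poly_moment m b r B r); [exact HB | exact Hp | lia].
Qed.

Corollary pte_taylor_increments m b r B a x0 : PTE m b r B -> (1 <= m)%nat ->
  equal_block_sums m b B (fun x =>
    taylor a x0 (S (S r)) (INR x / INR m) - taylor a x0 (S (S r)) ((INR x - 1) / INR m)).
Proof.
  intros HB Hm.
  assert (Hm0 : 0 < INR m) by (apply lt_0_INR; lia).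
  set (T := taylor a x0 (S (S r))).
  apply (equal_block_sums_ext m b B
    (fun x => (fun y => T (/ INR m * y + 0) - T (/ INR m * y + - / INR m)) (INR x))).
  - apply (pte_poly m b r B (fun y => T (/ INR m * y + 0) - T (/ INR m * y + - / INR m)) HB).
    apply poly_le_taylor_diff.
  - intros x. f_equal; f_equal; field; lra.
Qed.

Lemma pte_block_size m b r B : PTE m b r B -> (1 <= b)%nat ->
  forall j, (j < b)%nat -> INR (length (block B j (seq 1 m))) = INR m / INR b.
Proof.
  intros [Hpart Hreg] Hb j Hj.
  assert (Hsize : forall k, (k < b)%nat ->
            INR (length (block B k (seq 1 m))) = INR (length (block B 0 (seq 1 m)))).
  { intros k Hk. assert (E := Hreg 0%nat k 0%nat (Nat.le_0_l r) Hk ltac:(lia)).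
    rewrite !block_sum_lsum in E. simpl pow in E. rewrite !lsum_const in E. lra. }
  assert (Htotal := lsum_blocks B b (fun _ => 1) (seq 1 m)
                      ltac:(intros x Hx; apply in_seq in Hx; apply Hpart; lia)).
  rewrite (lsum_ext _ (fun _ => INR (length (block B 0 (seq 1 m))))) in Htotal.
  - rewrite !lsum_const, !length_seq in Htotal.
    assert (0 < INR b) by (apply lt_0_INR; lia).
    rewrite Hsize by exact Hj. field_simplify_eq; lra.
  - intros k Hk. apply in_seq in Hk. rewrite lsum_const, Hsize by lia. ring.
Qed.

Lemma block_sum_perturb m b B g w eps i j :
  equal_block_sums m b B w ->
  (forall x, (1 <= x <= m)%nat -> Rabs (g x - w x) <= eps) ->
  (i < b)%nat -> (j < b)%nat ->
  Rabs (block_sum m B i g - block_sum m B j g) <=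
    eps * (INR (length (block B i (seq 1 m))) + INR (length (block B j (seq 1 m)))).
Proof.
  intros Hw Hclose Hi Hj.
  assert (Hdev : forall k, Rabs (block_sum m B k g - block_sum m B k w)
                          <= eps * INR (length (block B k (seq 1 m)))).
  { intros k. rewrite !block_sum_lsum.
    replace (lsum g _ - lsum w _) with (lsum (fun x => g x - w x) (block B k (seq 1 m)))
      by (rewrite (lsum_ext _ (fun x => g x + -1 * w x)), lsum_plus, lsum_scal
            by (intros; ring); ring).
    apply lsum_abs_le. intros x Hx. unfold block in Hx.
    apply filter_In in Hx as [Hx _]. apply in_seq in Hx. apply Hclose. lia. }
  assert (Di := Hdev i). assert (Dj := Hdev j).
  replace (block_sum m B i g - block_sum m B j g) with
    ((block_sum m B i g - block_sum m B i w) - (block_sum m B j g - block_sum m B j w))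
    by (rewrite (Hw i j Hi Hj); ring).
  eapply Rle_trans; [apply Rabs_triang|]. rewrite Rabs_Ropp. lra.
Qed.

Lemma Rint_RInt f a b : ex_RInt f a b -> Rint f a b = RInt f a b.
Proof.
  intros Hex.
  assert (Hspec : exists pr : Riemann_integrable f a b, RiemannInt pr = Rint f a b).
  { unfold Rint. apply epsilon_spec.
    exists (RiemannInt (ex_RInt_Reals_0 _ _ _ Hex)). eexists; reflexivity. }
  destruct Hspec as [pr E]. now rewrite <- E, <- RInt_Reals.
Qed.

Lemma Rint_antiderivative_approx (f P T : R -> R) a b K :
  (forall x, 0 <= x <= 1 -> exists l, deriv01 f x l) ->
  (forall y, is_derive T y (P y)) -> (forall y, continuous P y) ->
  0 <= a -> a <= b -> b <= 1 ->
  (forall t, 0 <= t <= 1 -> Rabs (f t - P t) <= K) ->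
  Rabs (Rint f a b - (T b - T a)) <= (b - a) * K.
Proof.
  intros Hf HT HP Ha Hab Hb HK.
  assert (Hex : ex_RInt f a b).
  { apply (ex_RInt_ext (fun t => f (clamp t))).
    - intros x Hx. rewrite Rmin_left, Rmax_right in Hx by lra. rewrite clamp_id; lra.
    - apply (@ex_RInt_continuous R_CompleteNormedModule). intros z _.
      apply continuity_pt_filterlim, clamp_continuous, Hf. }
  assert (HPint : is_RInt P a b (T b - T a))
    by exact (is_RInt_derive T P a b (fun x _ => HT x) (fun x _ => HP x)).
  assert (Hdiff : is_RInt (fun y => f y - P y) a b (RInt f a b - (T b - T a)))
    by exact (is_RInt_minus _ _ _ _ _ _ (RInt_correct _ _ _ Hex) HPint).
  rewrite Rint_RInt, <- (is_RInt_unique _ _ _ _ Hdiff) by exact Hex.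
  apply abs_RInt_le_const; [exact Hab | eexists; exact Hdiff |].
  intros t Ht. apply HK. lra.
Qed.

Lemma cell_approx (f P T : R -> R) K (m x : nat) :
  (forall x, 0 <= x <= 1 -> exists l, deriv01 f x l) ->
  (forall y, is_derive T y (P y)) -> (forall y, continuous P y) ->
  (forall t, 0 <= t <= 1 -> Rabs (f t - P t) <= K) ->
  (1 <= x <= m)%nat ->
  Rabs (Rint f ((INR x - 1) / INR m) (INR x / INR m)
        - (T (INR x / INR m) - T ((INR x - 1) / INR m))) <= K / INR m.
Proof.
  intros Hf HT HP HK Hx.
  assert (Hx1 : 1 <= INR x) by (apply (le_INR 1); lia).
  assert (Hxm : INR x <= INR m) by (apply le_INR; lia).
  assert (Hm : 0 < INR m) by lra.
  replace (K / INR m) with ((INR x / INR m - (INR x - 1) / INR m) * K) by (field; lra).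
  apply Rint_antiderivative_approx with (P := P); auto.
  - apply Rdiv_le_0_compat; lra.
  - apply Rmult_le_compat_r; [left; apply Rinv_0_lt_compat|]; lra.
  - apply (Rmult_le_reg_r (INR m)); [exact Hm|].
    unfold Rdiv. rewrite Rmult_assoc, Rinv_l by lra. lra.
Qed.

Theorem mainTheorem15 (m b r : nat) (f : R -> R) (fd : nat -> R -> R) (M : R)
  (B : nat -> nat)
  (hm : (1 <= m)%nat) (hb : (1 <= b)%nat)
  (hf0 : forall x, fd 0%nat x = f x)
  (hder : forall k : nat, (k <= r)%nat ->
     forall x, 0 <= x <= 1 -> deriv01 (fd k) x (fd (S k) x))
  (hM : forall x, 0 <= x <= 1 -> Rabs (fd (S r) x) <= M)
  (hB : PTE m b r B) :
  let c := fun j : nat =>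
    block_sum m B j (fun i => Rint f ((INR i - 1) / INR m) (INR i / INR m)) in
  forall i j : nat, (i < b)%nat -> (j < b)%nat ->
    Rabs (c i - c j) <= M / (2 ^ r * INR b * INR (fact (S r))).
Proof.
  intros c i j Hi Hj.
  assert (Hb : 0 < INR b) by (apply lt_0_INR; lia).
  (* P: Taylor polynomial of f of degree r at 1/2; T: its antiderivative. *)
  set (a := fun k => fd k (/2)).
  set (P := taylor a (/2) (S r)).
  set (T := taylor (fun k => match k with O => 0 | S k' => a k' end) (/2) (S (S r))).
  set (K := M / (2 ^ S r * INR (fact (S r)))).
  assert (Hf : forall x, 0 <= x <= 1 -> exists l, deriv01 f x l).
  { intros x Hx. exists (fd 1%nat x). intros eps Heps.
    destruct (hder 0%nat (Nat.le_0_l r) x Hx eps Heps) as [d [Hd Hq]].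
    exists d. split; [exact Hd|]. intros h. rewrite <- !hf0. apply Hq. }
  assert (Hrem : forall t, 0 <= t <= 1 -> Rabs (f t - P t) <= K).
  { intros t Ht. rewrite <- hf0. apply taylor_remainder_midpoint; auto.
    intros k Hk. apply hder. lia. }
  assert (Hpert := block_sum_perturb m b B _ _ (K / INR m) i j
    (pte_taylor_increments m b r B _ (/2) hB hm)
    (fun x Hx => cell_approx f P T K m x Hf (taylor_derive _ _ _) (taylor_continuous _ _ _) Hrem Hx)
    Hi Hj).
  rewrite !(pte_block_size m b r B hB hb) in Hpert by assumption.
  eapply Rle_trans; [exact Hpert|]. right. unfold K. simpl pow.
  assert (Hm : 0 < INR m) by (apply lt_0_INR; lia).
  field. repeat split; try lra; [apply not_0_INR, fact_neq_0 | apply pow_nonzero; lra].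
Qed.
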